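(* Fix $\rho\in(0,1)$. The set of parameters $(\pi,\gamma)\in\Theta$ for which some optimal solution of the exploit LP satisfies (a) the fairness constraint $\alpha_{x,1}=\alpha_{x,0}$ for all $x$, respectively (b) the masking constraint $\sum_{x=1}^k\Pr(X=x)(\alpha_{x,1}-\alpha_{x,0})=0$, has Lebesgue measure zero in $\Theta$.
   Context: Fix an integer $k\ge 2$, $X\in\{1,\dots,k\}$, $P\in\{0,1\}$. The parameter space is $\Theta=\{(\pi,\gamma):\pi_{x,p}>0,\ \sum_{x,p}\pi_{x,p}=1,\ \gamma\in[0,1]^{2k}\}$ with Lebesgue measure, where $\pi_{x,p}=\Pr(X=x,P=p)$, $\Pr(X=x)=\pi_{x,0}+\pi_{x,1}$ and $\gamma_{x,p}=\mathbb{E}[Y\mid x,p]$. The exploit LP is: maximize $\mathcal{W}(\alpha)=\sum_{x,p}\gamma_{x,p}\alpha_{x,p}\pi_{x,p}$ over $\alpha\in[0,1]^{2k}$ subject to $\sum_{x,p}\alpha_{x,p}\pi_{x,p}=\rho$. *)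

From HB Require Import structures.
From mathcomp Require Import all_boot all_order all_algebra.
From mathcomp Require Import reals.
Set Implicit Arguments. Unset Strict Implicit. Unset Printing Implicit Defensive.
Import Order.TTheory GRing.Theory Num.Theory.
Local Open Scope ring_scope.

(* A cell (x,p): x : 'I_k encodes X = x+1 in {1,..,k}; p : bool encodes P
   (false = 0, true = 1). *)
Definition cell (k : nat) := ('I_k * bool)%type.

Definition Theta (R : realType) (k : nat) (pi gamma : cell k -> R) : Prop :=
  (forall c, 0 < pi c) /\ (\sum_(c : cell k) pi c = 1) /\
  (forall c, 0 <= gamma c <= 1).

Definition prX (R : realType) (k : nat) (pi : cell k -> R) (x : 'I_k) : R :=
  pi (x, false) + pi (x, true).

Definition W (R : realType) (k : nat) (pi gamma alpha : cell k -> R) : R :=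
  \sum_(c : cell k) gamma c * alpha c * pi c.

Definition lp_feasible (R : realType) (k : nat) (rho : R) (pi alpha : cell k -> R)
  : Prop :=
  (forall c, 0 <= alpha c <= 1) /\ (\sum_(c : cell k) alpha c * pi c = rho).

Definition lp_optimal (R : realType) (k : nat) (rho : R) (pi gamma alpha : cell k -> R)
  : Prop :=
  lp_feasible rho pi alpha /\
  forall beta, lp_feasible rho pi beta -> W pi gamma beta <= W pi gamma alpha.

Definition fair (R : realType) (k : nat) (alpha : cell k -> R) : Prop :=
  forall x : 'I_k, alpha (x, true) = alpha (x, false).

Definition masked (R : realType) (k : nat) (pi alpha : cell k -> R) : Prop :=
  \sum_(x < k) prX pi x * (alpha (x, true) - alpha (x, false)) = 0.

Definition lebesgue_null (R : realType) (J : finType) (S : (J -> R) -> Prop)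
  : Prop :=
  forall eps : R, 0 < eps ->
  exists a b : nat -> J -> R,
    (forall m j, a m j <= b m j) /\
    (forall v, S v -> exists m, forall j, a m j <= v j <= b m j) /\
    (forall N, \sum_(m < N) \prod_(j : J) (b m j - a m j) <= eps).

(* Lebesgue measure on Theta: Theta is (4k-1)-dimensional (pi lies on the
   simplex).  We use the affine chart that drops one coordinate c0 of pi;
   the resulting null sets do not depend on c0, and we require nullity in
   every such chart. *)
Definition chart (R : realType) (k : nat) (c0 : cell k) (pi gamma : cell k -> R)
  : ({c : cell k | c != c0} + cell k)%type -> R :=
  fun j => match j with inl c => pi (val c) | inr c => gamma c end.

Definition Theta_null (R : realType) (k : nat)
  (S : (cell k -> R) -> (cell k -> R) -> Prop) : Prop :=
  forall c0 : cell k,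
    lebesgue_null (fun v => exists pi gamma, S pi gamma /\ v = @chart R k c0 pi gamma).

From HB Require Import structures.
From mathcomp Require Import all_boot all_order all_algebra.
From mathcomp Require Import reals boolp.
From mathcomp Require Import ring lra zify.
Set Implicit Arguments. Unset Strict Implicit.
Import Order.TTheory GRing.Theory Num.Theory.
Local Open Scope ring_scope.

(* If the gammas are pairwise distinct, an exchange argument shows that an
   optimal alpha takes values in {0,1} except at most at one cell cs, so it is
   determined by T = {alpha = 1} and cs.  Fairness would make the twin of cs
   fractional too, which is impossible; with no fractional cell the budget
   constraint reads pi(T) = rho; and multiplying the masking constraint by
   pi(cs) turns it into a quadratic equation in pi.  Hence the bad parameters
   lie in finitely many zero sets of quadratic polynomials in the chart
   coordinates, none identically zero (test at point masses).  Such a zero set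
   is null in the unit cube: where some partial derivative is bounded away from
   0 it is a Lipschitz graph over the other coordinates, and its critical
   points lie on an affine hyperplane, or do not exist when the polynomial has
   no quadratic part. *)

Definition pair_code (n i : nat) : nat := 2 ^ n * (2 * i + 1).

Lemma pair_code_inj n i n' i' : pair_code n i = pair_code n' i' -> n = n' /\ i = i'.
Proof.
rewrite /pair_code; elim: n n' => [|n IH] [|n'] /=.
- rewrite !expn0 !mul1n => h; split => //; lia.
- by move=> /(congr1 odd); rewrite !oddM !oddX /= oddD oddM.
- by move=> /(congr1 odd); rewrite !oddM !oddX /= oddD oddM.
- rewrite !expnS -!mulnA => /eqP; rewrite eqn_pmul2l // => /eqP /IH [-> ->] //.
Qed.

Lemma pair_code_gt n i : (n < pair_code n i)%N /\ (i < pair_code n i)%N.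
Proof.
have h1 := ltn_expl n (isT : (1 < 2)%N).
have h2 : (0 < 2 ^ n)%N by rewrite expn_gt0.
by rewrite /pair_code; move: h1 h2; move: (2 ^ n)%N => P h1 h2; split; nia.
Qed.

Lemma sum_inv_pow2 (R : numFieldType) (N : nat) :
  \sum_(n < N) ((2 ^ n.+1)%:R : R)^-1 = 1 - ((2 ^ N)%:R)^-1.
Proof.
elim: N => [|N IH]; first by rewrite big_ord0 expn0 invr1 subrr.
rewrite big_ord_recr /= IH expnS natrM.
have h : ((2 ^ N)%:R : R) != 0 by rewrite pnatr_eq0 -lt0n expn_gt0.
by field.
Qed.

Lemma sumr_ord_le_support (R : numDomainType) (F : nat -> R) (K N : nat) :
  (forall m, 0 <= F m) -> (forall m, (K <= m)%N -> F m = 0) ->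
  \sum_(m < N) F m <= \sum_(m < K) F m.
Proof.
move=> F0 FK; rewrite -!(big_mkord xpredT).
case: (leqP N K) => h.
  by rewrite (big_cat_nat (leq0n N) h) /= lerDl; apply: sumr_ge0.
rewrite (big_cat_nat (leq0n K) (ltnW h)) /=.
suff -> : \sum_(K <= i < N) F i = 0 by rewrite addr0.
by rewrite big_nat_cond big1 // => m /andP[/andP[hm _] _]; apply: FK.
Qed.

Definition grid_index (R : realType) (n : nat) (x : R) : 'I_n.+1 :=
  inord (minn (Num.truncn (x * n.+1%:R)) n).

Lemma grid_indexP (R : realType) n (x : R) : 0 <= x <= 1 ->
  (grid_index n x)%:R / n.+1%:R <= x <= (grid_index n x).+1%:R / n.+1%:R.
Proof.
move=> /andP[x0 x1]; rewrite /grid_index inordK ?ltnS ?geq_minr //.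
have hn : (0 : R) < n.+1%:R by rewrite ltr0n.
have /andP[t1 t2] := truncn_itv (mulr_ge0 x0 (ltW hn)).
rewrite ler_pdivrMr // ler_pdivlMr //.
case: (leqP (Num.truncn (x * n.+1%:R)) n) => ht.
  by rewrite t1 /=; apply: ltW.
have hh : (n.+1%:R : R) <= (Num.truncn (x * n.+1%:R))%:R by rewrite ler_nat.
apply/andP; split; last by rewrite -{2}(mul1r n.+1%:R) ler_pM2r.
by apply: le_trans t1; apply: le_trans hh; rewrite ler_nat.
Qed.

Lemma grid_index_close (R : realType) n (x y : R) : 0 <= x <= 1 -> 0 <= y <= 1 ->
  grid_index n x = grid_index n y -> `|x - y| <= n.+1%:R^-1.
Proof.
move=> /(grid_indexP n) hx /(grid_indexP n) hy e; move: hx hy; rewrite e.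
set d := n.+1%:R^-1; rewrite -[(_.+1)%:R]natr1 mulrDl mul1r => /andP[x1 x2] /andP[y1 y2].
by rewrite ler_norml; apply/andP; split; lra.
Qed.

Section LebesgueNull.
Variables (R : realType) (J : finType) (j0 : J).
Implicit Types (S : (J -> R) -> Prop) (a b : J -> R).

Definition vol a b : R := \prod_j (b j - a j).

Definition unit_cube (v : J -> R) := forall j, 0 <= v j <= 1.

Lemma vol_ge0 a b : (forall j, a j <= b j) -> 0 <= vol a b.
Proof. by move=> h; apply: prodr_ge0 => j _; rewrite subr_ge0. Qed.

Lemma vol_diag a : vol a a = 0.
Proof. by rewrite /vol (bigD1 j0) //= subrr mul0r. Qed.

Lemma lebesgue_null_sub S S' : (forall v, S v -> S' v) ->
  lebesgue_null S' -> lebesgue_null S.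
Proof.
move=> sub h eps he; have [a [b [h1 [h2 h3]]]] := h eps he.
by exists a, b; split=> //; split=> // v /sub; apply: h2.
Qed.

Lemma lebesgue_null0 : lebesgue_null (fun _ : J -> R => False).
Proof.
move=> eps he; exists (fun _ _ => 0), (fun _ _ => 0); split=> //; split=> //.
by move=> N; rewrite big1 ?ltW // => m _; apply: vol_diag.
Qed.

Definition pair_decode (m : nat) : option ('I_m.+1 * 'I_m.+1) :=
  [pick x : 'I_m.+1 * 'I_m.+1 | pair_code x.1 x.2 == m].

Definition merge_boxes (A : nat -> nat -> J -> R) (m : nat) : J -> R :=
  if pair_decode m is Some x then A x.1 x.2 else fun _ => 0.

Lemma merge_boxes_code A n i : merge_boxes A (pair_code n i) = A n i.
Proof.
rewrite /merge_boxes /pair_decode; case: pickP => [x /eqP /pair_code_inj [-> ->] //|].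
have [/ltnW h1 /ltnW h2] := pair_code_gt n i.
by move=> /(_ (Ordinal (h1 : (n < _.+1)%N), Ordinal (h2 : (i < _.+1)%N))); rewrite /= eqxx.
Qed.

Lemma sum_vol_merge_boxes A B N : (forall n i j, A n i j <= B n i j) ->
  \sum_(m < N) vol (merge_boxes A m) (merge_boxes B m) <=
  \sum_(n < N) \sum_(i < N) vol (A n i) (B n i).
Proof.
move=> AB.
pose V (m : nat) (x : 'I_N * 'I_N) :=
  if pair_code x.1 x.2 == m then vol (A x.1 x.2) (B x.1 x.2) else 0.
have V0 m x : 0 <= V m x by rewrite /V; case: ifP => // _; apply: vol_ge0.
have volV (m : 'I_N) : vol (merge_boxes A m) (merge_boxes B m) <= \sum_x V m x.
  rewrite /merge_boxes /pair_decode; case: pickP => [x /eqP hx|_]; last first.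
    by rewrite vol_diag; apply: sumr_ge0 => y _; apply: V0.
  have hx1 : (x.1 < N)%N by move: (ltn_ord x.1) (ltn_ord m); lia.
  have hx2 : (x.2 < N)%N by move: (ltn_ord x.2) (ltn_ord m); lia.
  rewrite (bigD1 (Ordinal hx1, Ordinal hx2)) //= {1}/V hx eqxx lerDl.
  by apply: sumr_ge0 => y _; apply: V0.
apply: (le_trans (ler_sum _ (fun m _ => volV m))); rewrite exchange_big /=.
rewrite [X in _ <= X]pair_big /=; apply: ler_sum => -[n i] _.
rewrite /V /=; case: (ltnP (pair_code n i) N) => hc.
  rewrite (bigD1 (Ordinal hc)) //= eqxx big1 ?addr0 // => m /eqP hm.
  by case: eqP => // e; case: hm; apply: val_inj.
rewrite big1 ?vol_ge0 // => m _; case: eqP => // e.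
by move: (ltn_ord m); rewrite -e; lia.
Qed.

Lemma lebesgue_null_bigcup (S : nat -> (J -> R) -> Prop) :
  (forall n, lebesgue_null (S n)) -> lebesgue_null (fun v => exists n, S n v).
Proof.
move=> hS eps he.
have epsn n : 0 < eps / (2 ^ n.+1)%:R by rewrite divr_gt0 // ltr0n expn_gt0.
have cover n : exists AB : (nat -> J -> R) * (nat -> J -> R),
    [/\ forall m j, AB.1 m j <= AB.2 m j,
        forall v, S n v -> exists m, forall j, AB.1 m j <= v j <= AB.2 m j &
        forall N, \sum_(m < N) vol (AB.1 m) (AB.2 m) <= eps / (2 ^ n.+1)%:R].
  by have [a [b [? [? ?]]]] := hS n _ (epsn n); exists (a, b).
have [AB hAB] := boolp.choice cover.
pose A n := (AB n).1; pose B n := (AB n).2.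
exists (merge_boxes A), (merge_boxes B); split; [|split].
- move=> m j; rewrite /merge_boxes; case: pair_decode => // x.
  by have [h _ _] := hAB x.1; apply: h.
- move=> v [n hv]; have [_ /(_ v hv)[i hi] _] := hAB n.
  by exists (pair_code n i); rewrite !merge_boxes_code.
- move=> N; apply: le_trans (sum_vol_merge_boxes N _) _.
    by move=> n i j; have [h _ _] := hAB n; apply: h.
  apply: (@le_trans _ _ (\sum_(n < N) eps / (2 ^ n.+1)%:R)).
    by apply: ler_sum => n _; have [_ _ h] := hAB n; apply: h.
  rewrite -mulr_sumr sum_inv_pow2 -{2}(mulr1 eps) ler_pM2l // lerBlDr lerDl.
  by rewrite invr_ge0 ler0n.
Qed.

Lemma lebesgue_null_fin_bigcup (I : finType) (F : I -> (J -> R) -> Prop) :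
  (forall i, lebesgue_null (F i)) -> lebesgue_null (fun v => exists i, F i v).
Proof.
move=> hF.
apply: (@lebesgue_null_sub _ (fun v => exists n, exists2 i, (enum_rank i : nat) = n & F i v)).
  by move=> v [i hi]; exists (enum_rank i), i.
apply: lebesgue_null_bigcup => n.
case: (EM (exists i : I, (enum_rank i : nat) = n)) => [[i0 hi0]|hn].
  apply: (lebesgue_null_sub (S' := F i0)) => // v [i hi hv].
  suff /enum_rank_inj <- : enum_rank i = enum_rank i0 by [].
  by apply: val_inj; rewrite /= hi hi0.
by apply: lebesgue_null_sub lebesgue_null0 => v [i hi _]; apply: hn; exists i.
Qed.

Lemma lebesgue_nullU S1 S2 : lebesgue_null S1 -> lebesgue_null S2 ->
  lebesgue_null (fun v => S1 v \/ S2 v).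
Proof.
move=> h1 h2.
apply: (@lebesgue_null_sub _ (fun v => exists b : bool, (if b then S1 else S2) v)).
  by move=> v [h|h]; [exists true|exists false].
by apply: lebesgue_null_fin_bigcup => -[].
Qed.

Lemma lebesgue_null_fin_cover S :
  (forall eps, 0 < eps -> exists (G : finType) (a b : G -> J -> R),
    [/\ forall g j, a g j <= b g j,
        forall v, S v -> exists g, forall j, a g j <= v j <= b g j &
        \sum_g vol (a g) (b g) <= eps]) ->
  lebesgue_null S.
Proof.
move=> hS eps /hS [G [a [b [ab cov sum_le]]]].
pose enum_box (c : G -> J -> R) m : J -> R :=
  if insub m : option 'I_#|G| is Some i then c (enum_val i) else fun _ => 0.
exists (enum_box a), (enum_box b); split; [|split].
- by move=> m j; rewrite /enum_box; case: insub.
- move=> v /cov [g hg]; exists (enum_rank g : nat).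
  by rewrite /enum_box valK enum_rankK.
- move=> N; apply: le_trans sum_le.
  pose F m := vol (enum_box a m) (enum_box b m).
  apply: (@le_trans _ _ (\sum_(m < #|G|) F m)).
    apply: sumr_ord_le_support => m.
      by apply: vol_ge0 => j; rewrite /enum_box; case: insub.
    by move=> hm; rewrite /F /enum_box insubF ?vol_diag // ltnNge hm.
  have -> : \sum_(m < #|G|) F m = \sum_(i < #|G|) vol (a (enum_val i)) (b (enum_val i)).
    by apply: eq_bigr => i _; rewrite /F /enum_box valK.
  by rewrite -(big_enum_val (A := G) (fun g => vol (a g) (b g))).
Qed.

Lemma sum_grid_vol n (h : R) :
  \sum_(g : {ffun J -> 'I_n.+1}) \prod_j
     (if j == j0 then (if g j == ord0 then h else 0) else n.+1%:R^-1) = h.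
Proof.
rewrite -(bigA_distr_bigA (fun j (i : 'I_n.+1) =>
  if j == j0 then (if i == ord0 then h else 0) else n.+1%:R^-1)) /= (bigD1 j0) //=.
have -> : \prod_(j | j != j0) \sum_(i < n.+1)
    (if j == j0 then (if i == ord0 then h else 0) else n.+1%:R^-1) = 1.
  apply: big1 => j /negbTE ->.
  by rewrite sumr_const card_ord -[LHS]mulr_natr mulVf ?pnatr_eq0.
rewrite mulr1 (bigD1 ord0) //= eqxx big1 ?addr0 // => i /negbTE -> //.
Qed.

(* Only the cells with
   [g j0 = ord0] get a nonempty box, so that each cell is counted once. *)
Definition grid_box_lo n (h x : R) (g : {ffun J -> 'I_n.+1}) j : R :=
  if g j0 != ord0 then 0 else if j == j0 then x - h else (g j)%:R / n.+1%:R.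

Definition grid_box_hi n (h x : R) (g : {ffun J -> 'I_n.+1}) j : R :=
  if g j0 != ord0 then 0 else if j == j0 then x + h else (g j).+1%:R / n.+1%:R.

Lemma grid_box_le n (h x : R) (g : {ffun J -> 'I_n.+1}) j :
  0 <= h -> grid_box_lo h x g j <= grid_box_hi h x g j.
Proof.
move=> h0; rewrite /grid_box_lo /grid_box_hi; case: ifP => // _; case: ifP => _; first lra.
by rewrite ler_pM2r ?invr_gt0 ?ltr0n // ler_nat.
Qed.

Lemma sum_vol_grid_box n (h : R) (x : {ffun J -> 'I_n.+1} -> R) : 0 <= h ->
  \sum_g vol (grid_box_lo h (x g) g) (grid_box_hi h (x g) g) <= 2 * h.
Proof.
move=> h0; rewrite -(sum_grid_vol n (2 * h)); apply: ler_sum => g _.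
have d0 : (0 : R) < n.+1%:R^-1 by rewrite invr_gt0 ltr0n.
have f0 j : 0 <= (if j == j0 then (if g j == ord0 then 2 * h else 0) else n.+1%:R^-1).
  by case: ifP => _; [case: ifP => _; lra | exact: ltW].
rewrite /vol /grid_box_lo /grid_box_hi; case: (eqVneq (g j0) ord0) => [g0|_] /=; last first.
  by rewrite (bigD1 j0) //= subrr mul0r; apply: prodr_ge0.
apply: ler_prod => j _; case: (eqVneq j j0) => [->|hj]; rewrite ?g0 ?eqxx.
  by apply/andP; split; lra.
rewrite -[(_.+1)%:R]natr1 mulrDl mul1r addrAC subrr add0r lexx andbT.
exact: ltW.
Qed.

Lemma lebesgue_null_lipschitz_graph S (L : R) : 0 <= L ->
  (forall v, S v -> unit_cube v) ->
  (forall v w, S v -> S w -> `|v j0 - w j0| <= L * \sum_(j | j != j0) `|v j - w j|) ->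
  lebesgue_null S.
Proof.
move=> L0 Scube Slip; apply: lebesgue_null_fin_cover => eps eps0.
pose n := Num.truncn (2 * L * #|J|%:R / eps).
pose d : R := n.+1%:R^-1.
have d0 : 0 < d by rewrite invr_gt0 ltr0n.
pose h := L * #|J|%:R * d.
have h0 : 0 <= h by rewrite /h !mulr_ge0 ?ler0n ?(ltW d0).
have h2_le : 2 * h <= eps.
  have := truncnS_gt (2 * L * #|J|%:R / eps); rewrite -/n ltr_pdivrMr // => hn.
  by rewrite /h /d !mulrA ler_pdivrMr ?ltr0n // [X in _ <= X]mulrC; apply: ltW.
pose G := {ffun J -> 'I_n.+1}.
pose in_cell (g : G) v := S v /\ forall j, j != j0 -> grid_index n (v j) = g j.
have [rep repP] : {rep : G -> J -> R & forall g v, in_cell g v -> in_cell g (rep g)}.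
  apply: (boolp.choice (P := fun g r => forall v, in_cell g v -> in_cell g r)) => g.
  case: (EM (exists v, in_cell g v)) => [[v hv]|hn]; first by exists v.
  by exists (fun _ => 0) => w hw; case: hn; exists w.
exists G, (fun g => grid_box_lo h (rep g j0) g), (fun g => grid_box_hi h (rep g j0) g).
split=> [g j|w Sw|]; [exact: grid_box_le | | exact: le_trans (sum_vol_grid_box _ _) h2_le].
pose g : G := [ffun j => if j == j0 then ord0 else grid_index n (w j)].
have cell_w : in_cell g w by split => // j hj; rewrite ffunE (negbTE hj).
have [Sv cell_v] := repP g w cell_w.
have close j : j != j0 -> `|w j - rep g j| <= d.
  move=> hj; apply: grid_index_close; rewrite ?(Scube _ Sw) ?(Scube _ Sv) //.
  by rewrite (cell_v j hj) (cell_w.2 j hj).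
have close0 : `|w j0 - rep g j0| <= h.
  apply: le_trans (Slip _ _ Sw Sv) _; rewrite /h -mulrA ler_wpM2l //.
  apply: (@le_trans _ _ (\sum_(j | j != j0) d)); first exact: ler_sum.
  apply: (@le_trans _ _ (\sum_(j : J) d)); last by rewrite sumr_const mulr_natl.
  rewrite [X in _ <= X](bigID (fun j => j != j0)) /= lerDl.
  by apply: sumr_ge0 => j _; apply: ltW.
exists g => j; rewrite /grid_box_lo /grid_box_hi ffunE eqxx /=.
case: (eqVneq j j0) => [->|hj].
  by move: close0; rewrite ler_norml => /andP[? ?]; apply/andP; split; lra.
by rewrite -(cell_w.2 j hj); apply: grid_indexP; apply: Scube.
Qed.
End LebesgueNull.

Section Quadratic.
Variables (R : realType) (J : finType).
Implicit Types (F G : (J -> R) -> R) (v w : J -> R).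

Definition quad_form (q : J -> J -> R) (l : J -> R) (e : R) v : R :=
  \sum_i \sum_j q i j * v i * v j + \sum_j l j * v j + e.

Definition is_affine F := exists (l : J -> R) (e : R), forall v, F v = \sum_j l j * v j + e.

Definition is_quadratic F := exists q l e, forall v, F v = quad_form q l e v.

Lemma affine_ext F G : (forall v, F v = G v) -> is_affine G -> is_affine F.
Proof. by move=> FG [l [e hG]]; exists l, e => v; rewrite FG hG. Qed.

Lemma quadratic_ext F G : (forall v, F v = G v) -> is_quadratic G -> is_quadratic F.
Proof. by move=> FG [q [l [e hG]]]; exists q, l, e => v; rewrite FG hG. Qed.

Lemma affine_cst c : is_affine (fun _ => c).
Proof. by exists (fun _ => 0), c => v; rewrite big1 ?add0r // => j _; rewrite mul0r. Qed.

Lemma affine_coord i : is_affine (fun v => v i).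
Proof.
exists (fun j => if j == i then 1 else 0), 0 => v.
by rewrite addr0 (bigD1 i) //= eqxx mul1r big1 ?addr0 // => j /negbTE ->; rewrite mul0r.
Qed.

Lemma affineD F G : is_affine F -> is_affine G -> is_affine (fun v => F v + G v).
Proof.
move=> [l [e hF]] [l' [e' hG]]; exists (fun j => l j + l' j), (e + e') => v.
have -> : \sum_j (l j + l' j) * v j = \sum_j l j * v j + \sum_j l' j * v j.
  by rewrite -big_split; apply: eq_bigr => j _; rewrite mulrDl.
rewrite hF hG; lra.
Qed.

Lemma affineZ c F : is_affine F -> is_affine (fun v => c * F v).
Proof.
move=> [l [e hF]]; exists (fun j => c * l j), (c * e) => v.
by rewrite hF mulrDr mulr_sumr; congr (_ + _); apply: eq_bigr => j _; rewrite mulrA.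
Qed.

Lemma affineB F G : is_affine F -> is_affine G -> is_affine (fun v => F v - G v).
Proof.
move=> hF /(affineZ (-1)) hG; apply: affine_ext (affineD hF hG) => v.
by rewrite mulN1r.
Qed.

Lemma affine_sum (I : Type) (r : seq I) (P : pred I) (F : I -> (J -> R) -> R) :
  (forall i, is_affine (F i)) -> is_affine (fun v => \sum_(i <- r | P i) F i v).
Proof.
move=> hF; elim: r => [|i r IH].
  by apply: affine_ext (affine_cst 0) => v; rewrite big_nil.
case Pi: (P i).
  by apply: affine_ext (affineD (hF i) IH) => v; rewrite big_cons Pi.
by apply: affine_ext IH => v; rewrite big_cons Pi.
Qed.

Lemma quadratic_affine F : is_affine F -> is_quadratic F.
Proof.
move=> [l [e hF]]; exists (fun _ _ => 0), l, e => v.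
rewrite hF /quad_form.
suff -> : \sum_i \sum_j (fun _ _ => 0 : R) i j * v i * v j = 0 by rewrite add0r.
by apply: big1 => i _; apply: big1 => j _; rewrite !mul0r.
Qed.

Lemma quadraticD F G : is_quadratic F -> is_quadratic G -> is_quadratic (fun v => F v + G v).
Proof.
move=> [q [l [e hF]]] [q' [l' [e' hG]]].
exists (fun i j => q i j + q' i j), (fun j => l j + l' j), (e + e') => v.
rewrite hF hG /quad_form /=.
have -> : \sum_j (l j + l' j) * v j = \sum_j l j * v j + \sum_j l' j * v j.
  by rewrite -big_split; apply: eq_bigr => j _; rewrite mulrDl.
have -> : \sum_i \sum_j (q i j + q' i j) * v i * v j =
    \sum_i \sum_j q i j * v i * v j + \sum_i \sum_j q' i j * v i * v j.
  rewrite -big_split; apply: eq_bigr => i _.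
  by rewrite -big_split; apply: eq_bigr => j _; rewrite !mulrDl.
lra.
Qed.

Lemma quadraticM F G : is_affine F -> is_affine G -> is_quadratic (fun v => F v * G v).
Proof.
move=> [l [e hF]] [m [f hG]].
exists (fun i j => l i * m j), (fun j => e * m j + f * l j), (e * f) => v.
have prodE : (\sum_j l j * v j) * (\sum_j m j * v j) = \sum_i \sum_j l i * m j * v i * v j.
  rewrite mulr_suml; apply: eq_bigr => i _; rewrite mulr_sumr; apply: eq_bigr => j _.
  by rewrite mulrACA -[RHS]mulrA.
have linE : \sum_j (e * m j + f * l j) * v j =
    e * (\sum_j m j * v j) + f * (\sum_j l j * v j).
  by rewrite !mulr_sumr -big_split; apply: eq_bigr => j _; rewrite mulrDl !mulrA.
rewrite hF hG /quad_form /= linE -prodE; lra.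
Qed.

Lemma quadratic_sum (I : Type) (r : seq I) (P : pred I) (F : I -> (J -> R) -> R) :
  (forall i, is_quadratic (F i)) -> is_quadratic (fun v => \sum_(i <- r | P i) F i v).
Proof.
move=> hF; elim: r => [|i r IH].
  by apply: quadratic_ext (quadratic_affine (affine_cst 0)) => v; rewrite big_nil.
case Pi: (P i).
  by apply: quadratic_ext (quadraticD (hF i) IH) => v; rewrite big_cons Pi.
by apply: quadratic_ext IH => v; rewrite big_cons Pi.
Qed.

Definition midpoint v w : J -> R := fun i => (v i + w i) / 2.

Definition quad_grad (q : J -> J -> R) (l : J -> R) (j : J) v : R :=
  \sum_i (q i j + q j i) * v i + l j.

Lemma quad_form_diff q l e v w :
  quad_form q l e v - quad_form q l e w =
  \sum_j quad_grad q l j (midpoint v w) * (v j - w j).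
Proof.
set m := midpoint v w.
have quadE : \sum_i \sum_j q i j * v i * v j - \sum_i \sum_j q i j * w i * w j =
    \sum_j \sum_i (q i j + q j i) * m i * (v j - w j).
  rewrite -sumrB.
  transitivity (\sum_i (\sum_j q i j * m i * (v j - w j) +
                        \sum_j q i j * (v i - w i) * m j)).
    apply: eq_bigr => i _; rewrite -sumrB -big_split; apply: eq_bigr => j _.
    by rewrite /m /midpoint /=; field.
  rewrite big_split /= [X in X + _]exchange_big -big_split; apply: eq_bigr => j _.
  by rewrite -big_split; apply: eq_bigr => i _ /=; ring.
have linE : \sum_j l j * v j - \sum_j l j * w j = \sum_j l j * (v j - w j).
  by rewrite -sumrB; apply: eq_bigr => j _; rewrite mulrBr.
have gradE : \sum_j quad_grad q l j m * (v j - w j) =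
    \sum_j \sum_i (q i j + q j i) * m i * (v j - w j) + \sum_j l j * (v j - w j).
  by rewrite -big_split; apply: eq_bigr => j _; rewrite mulrDl mulr_suml.
rewrite gradE -quadE -linE /quad_form; lra.
Qed.

Lemma quad_grad_midpoint q l j v w :
  quad_grad q l j (midpoint v w) = (quad_grad q l j v + quad_grad q l j w) / 2.
Proof.
rewrite /quad_grad /midpoint.
have -> : \sum_i (q i j + q j i) * ((v i + w i) / 2) =
    (\sum_i (q i j + q j i) * v i + \sum_i (q i j + q j i) * w i) / 2.
  by rewrite -big_split mulr_suml; apply: eq_bigr => i _ /=; field.
by field.
Qed.

Lemma unit_cube_midpoint v w : unit_cube v -> unit_cube w -> unit_cube (midpoint v w).
Proof.
move=> hv hw i; have /andP[? ?] := hv i; have /andP[? ?] := hw i.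
by rewrite /midpoint; apply/andP; split; lra.
Qed.

Lemma norm_quad_grad_le q l j v : unit_cube v ->
  `|quad_grad q l j v| <= \sum_i `|q i j + q j i| + `|l j|.
Proof.
move=> hv; apply: (le_trans (ler_normD _ _)); rewrite lerD2r.
apply: (le_trans (ler_norm_sum _ _ _)); apply: ler_sum => i _.
have /andP[v0 v1] := hv i.
by rewrite normrM -[X in _ <= X]mulr1 ler_wpM2l // ger0_norm.
Qed.

Lemma norm_coord_le_of_sum_eq0 (c h : J -> R) (i : J) (mu B : R) :
  0 < mu -> mu <= `|c i| -> (forall j, `|c j| <= B) -> \sum_j c j * h j = 0 ->
  `|h i| <= B / mu * \sum_(j | j != i) `|h j|.
Proof.
move=> mu0 mu_le cB hs.
have hi : c i * h i = - \sum_(j | j != i) c j * h j.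
  by move: hs; rewrite (bigD1 i) //=; lra.
have hB : `|c i| * `|h i| <= B * \sum_(j | j != i) `|h j|.
  rewrite -normrM hi normrN mulr_sumr.
  apply: (le_trans (ler_norm_sum _ _ _)); apply: ler_sum => j _.
  by rewrite normrM ler_wpM2r.
rewrite mulrAC ler_pdivlMr // mulrC; apply: le_trans hB.
by rewrite ler_wpM2r.
Qed.
End Quadratic.

Section QuadraticZeros.
Variables (R : realType) (J : finType) (j0 : J).
Implicit Types (v w : J -> R) (q : J -> J -> R) (l : J -> R) (e : R).

Lemma lebesgue_null_affine_zeros (c : J -> R) e (i : J) : c i != 0 ->
  lebesgue_null (fun v => unit_cube v /\ \sum_j c j * v j + e = 0).
Proof.
move=> ci; pose B := \sum_j `|c j|.
apply: (@lebesgue_null_lipschitz_graph R J i _ (B / `|c i|)).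
- by apply: divr_ge0 => //; apply: sumr_ge0.
- by move=> v [].
move=> v w [_ hv] [_ hw].
apply: (norm_coord_le_of_sum_eq0 (c := c) (h := fun j => v j - w j)) => //.
- by rewrite normr_gt0.
- by move=> j; rewrite /B (bigD1 j) //= lerDl; apply: sumr_ge0.
have -> : \sum_j c j * (v j - w j) = \sum_j c j * v j - \sum_j c j * w j.
  by rewrite -sumrB; apply: eq_bigr => j _; rewrite mulrBr.
lra.
Qed.

Lemma lebesgue_null_quad_critical q l e : (exists v0, quad_form q l e v0 != 0) ->
  lebesgue_null (fun v =>
    [/\ unit_cube v, quad_form q l e v = 0 & forall j, quad_grad q l j v = 0]).
Proof.
move=> [v0 Fv0]; case: (EM (exists i j, q i j + q j i != 0)) => [[i [j qij]]|qsym0].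
  apply: (lebesgue_null_sub (S' := fun v =>
    unit_cube v /\ \sum_i (q i j + q j i) * v i + l j = 0)).
    by move=> v [cv _ /(_ j) gj]; split.
  exact: (@lebesgue_null_affine_zeros (fun i => q i j + q j i) (l j) i qij).
(* Without quadratic part the gradient is the constant [l], so a critical zero
   would make the form vanish identically. *)
apply: lebesgue_null_sub (lebesgue_null0 j0) => v [_ Fv gv]; move: Fv0.
have gradE j w : quad_grad q l j w = l j.
  rewrite /quad_grad big1 ?add0r // => i _.
  case: (eqVneq (q i j + q j i) 0) => [-> | qij]; first by rewrite mul0r.
  by case: qsym0; exists i, j.
have := quad_form_diff q l e v v0; rewrite Fv big1 => [|j _]; last first.
  by rewrite gradE -(gradE j v) gv mul0r.
by rewrite sub0r => /eqP; rewrite oppr_eq0 => /eqP ->; rewrite eqxx.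
Qed.

Lemma lebesgue_null_quad_regular q l e (j : J) (s : bool) (n : nat) :
  lebesgue_null (fun v => [/\ unit_cube v, quad_form q l e v = 0 &
                              n.+1%:R^-1 <= (-1) ^+ s * quad_grad q l j v]).
Proof.
pose K := \sum_i (\sum_i' `|q i' i + q i i'| + `|l i|).
have K_ge i : \sum_i' `|q i' i + q i i'| + `|l i| <= K.
  rewrite /K [X in _ <= X](bigD1 i) //= lerDl.
  by apply: sumr_ge0 => i' _; apply: addr_ge0 => //; apply: sumr_ge0.
have mu0 : (0 : R) < n.+1%:R^-1 by rewrite invr_gt0 ltr0n.
apply: (@lebesgue_null_lipschitz_graph R J j _ (K / n.+1%:R^-1)).
- apply: divr_ge0 (ltW mu0); apply: le_trans (K_ge j).
  by apply: addr_ge0 => //; apply: sumr_ge0.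
- by move=> v [].
move=> v w [cv Fv gv] [cw Fw gw].
apply: (norm_coord_le_of_sum_eq0 (c := fun i => quad_grad q l i (midpoint v w))
          (h := fun i => v i - w i)) => //.
- rewrite -(normrMsign s) quad_grad_midpoint mulrA mulrDr.
  move: gv gw mu0; set a := (-1) ^+ s * _; set b := (-1) ^+ s * _.
  set mu := n.+1%:R^-1 => gv gw mu0.
  by rewrite ger0_norm; lra.
- move=> i; apply: le_trans (K_ge i).
  by apply: norm_quad_grad_le; apply: unit_cube_midpoint.
by rewrite -(quad_form_diff q l e) Fv Fw subrr.
Qed.

Lemma lebesgue_null_quadratic_zeros F : is_quadratic F -> (exists v0, F v0 != 0) ->
  lebesgue_null (fun v => unit_cube v /\ F v = 0).
Proof.
move=> [q [l [e hF]]] [v0 Fv0].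
pose regular v (js : J * bool) n := [/\ unit_cube v, quad_form q l e v = 0 &
  n.+1%:R^-1 <= (-1) ^+ js.2 * quad_grad q l js.1 v].
apply: (lebesgue_null_sub (S' := fun v =>
  [/\ unit_cube v, quad_form q l e v = 0 & forall j, quad_grad q l j v = 0] \/
  exists js n, regular v js n)).
  move=> v [cv]; rewrite hF => Fv.
  case: (EM (forall j, quad_grad q l j v = 0)) => [g0|]; first by left.
  move=> /existsNP [j gj]; right; exists (j, quad_grad q l j v < 0).
  set t := quad_grad q l j v in gj *.
  have t0 : 0 < `|t| by rewrite normr_gt0; apply/eqP.
  exists (Num.truncn `|t|^-1); split => //=; rewrite -normrEsign.
  have := truncnS_gt `|t|^-1; set N := (Num.truncn _).+1%:R => hN.
  by rewrite -(invrK `|t|) lef_pV2 ?posrE ?invr_gt0 ?ltr0n // ltW.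
apply: (lebesgue_nullU j0).
  by apply: lebesgue_null_quad_critical; exists v0; rewrite -hF.
apply: (lebesgue_null_fin_bigcup j0) => js; apply: (lebesgue_null_bigcup j0) => n.
exact: lebesgue_null_quad_regular.
Qed.
End QuadraticZeros.

Lemma unit_itv_frac_or_binary (R : realDomainType) (x : R) : 0 <= x <= 1 ->
  0 < x < 1 \/ x = 0 \/ x = 1.
Proof.
move=> /andP[x0 x1]; case: (eqVneq x 0) => [|x_neq0]; first by right; left.
case: (eqVneq x 1) => [|x_neq1]; first by right; right.
by left; rewrite lt_neqAle eq_sym x_neq0 x0 lt_neqAle x_neq1 x1.
Qed.

Section ExploitLP.
Variables (R : realType) (k : nat) (rho : R).
Implicit Types (pi gamma alpha : cell k -> R) (c d : cell k).

Definition shift_mass alpha pi c d (t : R) (e : cell k) : R :=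
  if e == c then alpha c + t / pi c else if e == d then alpha d - t / pi d else alpha e.

Lemma sum_shift_mass (F : cell k -> R) alpha pi c d t : c != d -> pi c != 0 -> pi d != 0 ->
  \sum_e F e * shift_mass alpha pi c d t e * pi e =
  \sum_e F e * alpha e * pi e + t * (F c - F d).
Proof.
move=> cd pc pd; rewrite (bigD1 c) // [in RHS](bigD1 c) //= (bigD1 d) 1?eq_sym //=.
rewrite [in RHS](bigD1 d) 1?eq_sym //= /shift_mass eqxx (negbTE (_ : d != c)) 1?eq_sym //.
rewrite eqxx (eq_bigr (fun e => F e * alpha e * pi e)) => [|e /andP[ec ed]]; last first.
  by rewrite (negbTE ec) (negbTE ed).
rewrite -!mulrA mulrDl mulrBl !divfK //; ring.
Qed.

Lemma optimal_exchange pi gamma alpha c d : (forall e, 0 < pi e) ->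
  lp_optimal rho pi gamma alpha -> gamma d < gamma c -> alpha c = 1 \/ alpha d = 0.
Proof.
move=> pi0 [[alpha01 alpha_sum] alpha_max] gdc.
case: (EM (alpha c = 1 \/ alpha d = 0)) => // /not_orP [ac_ne1 ad_ne0]; exfalso.
have cd : c != d by apply: contraTneq gdc => ->; rewrite ltxx.
have /andP[ac0 ac_le1] := alpha01 c; have /andP[ad_ge0 ad1] := alpha01 d.
have ac1 : alpha c < 1 by rewrite lt_neqAle ac_le1 andbT; apply/eqP.
have ad0 : 0 < alpha d by rewrite lt_neqAle ad_ge0 andbT eq_sym; apply/eqP.
have pc := pi0 c; have pd := pi0 d.
(* Move the largest admissible mass [t] from [d] to the better cell [c]. *)
pose t := Num.min ((1 - alpha c) * pi c) (alpha d * pi d).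
have t0 : 0 < t by rewrite lt_min !mulr_gt0 ?subr_gt0.
have tc : t / pi c <= 1 - alpha c by rewrite ler_pdivrMr // ge_min lexx.
have td : t / pi d <= alpha d by rewrite ler_pdivrMr // ge_min lexx orbT.
have tc0 : 0 < t / pi c by apply: divr_gt0.
have td0 : 0 < t / pi d by apply: divr_gt0.
pose beta := shift_mass alpha pi c d t.
have beta_feas : lp_feasible rho pi beta.
  split.
    move=> e; rewrite /beta /shift_mass.
    by case: eqP => _; [|case: eqP => _]; rewrite ?alpha01 //; apply/andP; split; lra.
  rewrite -alpha_sum (eq_bigr (fun e => 1 * beta e * pi e)) => [|e _]; last by rewrite mul1r.
  rewrite sum_shift_mass ?gt_eqF // subrr mulr0 addr0.
  by apply: eq_bigr => e _; rewrite mul1r.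
have := alpha_max _ beta_feas; rewrite /W sum_shift_mass ?gt_eqF // gerDl.
by rewrite pmulr_rle0 // subr_le0 leNgt gdc.
Qed.

Definition fractional alpha c := 0 < alpha c < 1.

Lemma optimal_fractional_unique pi gamma alpha c d : (forall e, 0 < pi e) ->
  lp_optimal rho pi gamma alpha -> injective gamma ->
  fractional alpha c -> fractional alpha d -> c = d.
Proof.
move=> pi0 opt gamma_inj /andP[c0 c1] /andP[d0 d1].
case: (eqVneq c d) => // /(contra_neq (@gamma_inj c d)); rewrite neq_lt => /orP[] lt_g.
  by case: (optimal_exchange pi0 opt lt_g) => e; [move: d1 | move: c0]; rewrite e ltxx.
by case: (optimal_exchange pi0 opt lt_g) => e; [move: c1 | move: d0]; rewrite e ltxx.
Qed.

Lemma fair_fractional_twin alpha (x : 'I_k) (b : bool) :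
  fair alpha -> fractional alpha (x, b) -> fractional alpha (x, ~~ b).
Proof. by case: b; rewrite /fractional /= => ->. Qed.

Lemma optimal_binary_off pi gamma alpha cs c : (forall e, 0 < pi e) ->
  lp_optimal rho pi gamma alpha -> injective gamma -> fractional alpha cs ->
  c != cs -> alpha c = (c \in [set e | alpha e == 1])%:R.
Proof.
move=> pi0 opt gamma_inj fcs ccs; rewrite inE.
have [fc|[->|->]] := unit_itv_frac_or_binary (opt.1.1 c); rewrite ?eqxx //.
  by case/eqP: ccs; apply: (optimal_fractional_unique pi0 opt gamma_inj fc fcs).
by rewrite eq_sym oner_eq0.
Qed.
End ExploitLP.

Section Degenerate.
Variables (R : realType) (k : nat) (rho : R).
Implicit Types (p pi gamma alpha : cell k -> R) (T : {set cell k}) (c cs : cell k).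

Definition budget_gap T p : R := \sum_(c in T) p c - rho.

(* [p cs * alpha c] for the feasible [alpha] equal to [1] on [T], to [0] off
   [T :|: [set cs]], whose remaining budget is taken up by the cell [cs]. *)
Definition vertex_mass T cs p c : R :=
  if c == cs then rho - \sum_(c' in T :\ cs) p c' else (c \in T)%:R * p cs.

Definition mask_poly T cs p : R :=
  \sum_(x < k) prX p x * (vertex_mass T cs p (x, true) - vertex_mass T cs p (x, false)).

Lemma budget_gap_eq0 T pi : \sum_c (c \in T)%:R * pi c = rho -> budget_gap T pi = 0.
Proof.
rewrite /budget_gap => <-; apply/eqP; rewrite subr_eq0 big_mkcond; apply/eqP/eq_bigr => c _.
by case: (c \in T); rewrite ?mul1r ?mul0r.
Qed.

Lemma vertex_massE T cs pi alpha : cs \notin T ->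
  (forall c, c != cs -> alpha c = (c \in T)%:R) -> \sum_c alpha c * pi c = rho ->
  forall c, vertex_mass T cs pi c = pi cs * alpha c.
Proof.
move=> csT alphaE alpha_sum c; rewrite /vertex_mass; case: (eqVneq c cs) => [->|ccs].
  have -> : \sum_(c' in T :\ cs) pi c' = \sum_(c' | c' != cs) alpha c' * pi c'.
    rewrite big_mkcond [RHS]big_mkcond; apply: eq_bigr => c' _.
    rewrite in_setD1; case: (eqVneq c' cs) => //= c'cs.
    by rewrite alphaE //; case: (c' \in T); rewrite ?mul1r ?mul0r.
  by rewrite -alpha_sum (bigD1 cs) //= addrK mulrC.
by rewrite alphaE // mulrC.
Qed.

Lemma mask_poly_eq0 T cs pi alpha : cs \notin T ->
  (forall c, c != cs -> alpha c = (c \in T)%:R) -> \sum_c alpha c * pi c = rho ->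
  masked pi alpha -> mask_poly T cs pi = 0.
Proof.
move=> csT alphaE alpha_sum masked_a; rewrite /mask_poly.
rewrite (eq_bigr (fun x => pi cs * (prX pi x * (alpha (x, true) - alpha (x, false))))).
  by rewrite -mulr_sumr masked_a mulr0.
by move=> x _; rewrite !(vertex_massE csT alphaE alpha_sum); ring.
Qed.

Lemma optimal_degenerate pi gamma alpha : Theta pi gamma ->
  lp_optimal rho pi gamma alpha -> fair alpha \/ masked pi alpha ->
  [\/ exists c d, c != d /\ gamma c = gamma d,
      exists T, budget_gap T pi = 0 |
      exists T cs, mask_poly T cs pi = 0].
Proof.
move=> [pi0 _] opt fair_or_masked.
case: (EM (exists c d, c != d /\ gamma c = gamma d)) => [gamma_tie|gamma_distinct].
  by constructor 1.
have gamma_inj : injective gamma.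
  move=> c d gcd; apply/eqP; apply: contraT => cd.
  by case: gamma_distinct; exists c, d.
have [[alpha01 alpha_sum] _] := opt.
pose T := [set c | alpha c == 1].
case: (EM (exists cs, fractional alpha cs)) => [[cs fcs]|no_frac].
  have alphaE c : c != cs -> alpha c = (c \in T)%:R.
    exact: (optimal_binary_off pi0 opt gamma_inj fcs).
  have csT : cs \notin T by rewrite inE lt_eqF //; case/andP: fcs.
  case: fair_or_masked => [fair_a|masked_a].
    move: fcs {alphaE csT}; case: cs => x b fcs.
    have := optimal_fractional_unique pi0 opt gamma_inj (fair_fractional_twin fair_a fcs) fcs.
    by case: b {fcs} => /(congr1 snd).
  by constructor 3; exists T, cs; apply: mask_poly_eq0 alphaE alpha_sum masked_a.
constructor 2; exists T; apply: budget_gap_eq0; rewrite -alpha_sum.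
apply: eq_bigr => c _; rewrite inE.
have [fc|[-> | ->]] := unit_itv_frac_or_binary (alpha01 c); rewrite ?eqxx //.
  by case: no_frac; exists c.
by rewrite eq_sym oner_eq0.
Qed.

Lemma budget_gap_point_mass T a : 0 < rho < 1 -> budget_gap T (fun c => (c == a)%:R) != 0.
Proof.
move=> /andP[r0 r1]; rewrite /budget_gap.
have -> : \sum_(c in T) ((c == a)%:R : R) = (a \in T)%:R.
  rewrite big_mkcond (bigD1 a) //= eqxx big1 ?addr0 => [|c /negbTE ->]; last first.
    by case: (c \in T).
  by case: (a \in T).
by case: (a \in T) => /=; apply/eqP; lra.
Qed.

Lemma mask_poly_point_mass T cs : 0 < rho < 1 -> mask_poly T cs (fun c => (c == cs)%:R) != 0.
Proof.
move=> /andP[r0 r1]; case: cs => x b; set p := fun c => _.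
have vm_cs : vertex_mass T (x, b) p (x, b) = rho.
  rewrite /vertex_mass eqxx big1 ?subr0 // => c; rewrite in_setD1 /p.
  by case/andP => /negbTE ->.
have vm c : c != (x, b) -> vertex_mass T (x, b) p c = (c \in T)%:R.
  by move=> /negbTE ccs; rewrite /vertex_mass ccs /p eqxx mulr1.
rewrite /mask_poly (bigD1 x) //= big1 ?addr0 => [|y yx]; last first.
  have ne b' : (y, b') != (x, b) by apply: contraNneq yx => -[->].
  by rewrite /prX /p !(negbTE (ne _)) addr0 mul0r.
have px : prX p x = 1.
  by rewrite /prX /p !xpair_eqE eqxx /=; destruct b; rewrite /= ?add0r ?addr0.
rewrite px mul1r; clearbody p.
case: b vm_cs vm => vm_cs vm; rewrite vm_cs vm ?xpair_eqE ?eqxx //.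
  by case: (_ \in T) => /=; apply/eqP; lra.
by case: (_ \in T) => /=; apply/eqP; lra.
Qed.
End Degenerate.

Section Chart.
Variables (R : realType) (k : nat) (rho : R) (c0 : cell k).
Hypotheses (rho_gt0 : 0 < rho) (rho_lt1 : rho < 1).

Local Notation J := ({c : cell k | c != c0} + cell k)%type.
Implicit Types (v : J -> R) (pi gamma : cell k -> R) (c : cell k).

Definition chart_coord v c : R := if insub c is Some c' then v (inl c') else 0.

Definition chart_pi v c : R :=
  if c == c0 then 1 - \sum_(c' | c' != c0) chart_coord v c' else chart_coord v c.

Lemma chart_coordE pi gamma c : c != c0 -> chart_coord (@chart R k c0 pi gamma) c = pi c.
Proof. by move=> cc0; rewrite /chart_coord insubT. Qed.

Lemma chart_piK pi gamma : \sum_c pi c = 1 -> chart_pi (@chart R k c0 pi gamma) = pi.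
Proof.
move=> pi_sum; apply: funext => c; rewrite /chart_pi.
case: (eqVneq c c0) => [->|cc0]; last exact: chart_coordE.
rewrite (eq_bigr pi) => [|c' /chart_coordE //].
by move: pi_sum; rewrite (bigD1 c0) //=; lra.
Qed.

Lemma affine_chart_pi c : is_affine (fun v => chart_pi v c).
Proof.
have coord c' : is_affine (fun v => chart_coord v c').
  by rewrite /chart_coord; case: insub => [c''|]; [apply: affine_coord | apply: affine_cst].
rewrite /chart_pi; case: (c == c0); last exact: coord.
by apply: affineB; [apply: affine_cst | apply: affine_sum].
Qed.

Lemma quadratic_mask_poly T cs : is_quadratic (fun v => mask_poly rho T cs (chart_pi v)).
Proof.
have vm c : is_affine (fun v => vertex_mass rho T cs (chart_pi v) c).
  rewrite /vertex_mass; case: (c == cs).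
    by apply: affineB; [apply: affine_cst | apply: affine_sum => c'; apply: affine_chart_pi].
  exact: (affineZ _ (affine_chart_pi cs)).
rewrite /mask_poly; apply: quadratic_sum => x; apply: quadraticM.
  by apply: affineD; apply: affine_chart_pi.
exact: affineB.
Qed.

(* The three kinds of degenerate parameters of [optimal_degenerate]. *)
Definition piece := ((cell k * cell k) + ({set cell k} + ({set cell k} * cell k)))%type.

Definition piece_poly (i : piece) v : R :=
  match i with
  | inl cd => v (inr cd.1) - v (inr cd.2)
  | inr (inl T) => budget_gap rho T (chart_pi v)
  | inr (inr Tcs) => mask_poly rho Tcs.1 Tcs.2 (chart_pi v)
  end.

Definition piece_proper (i : piece) : bool := if i is inl cd then cd.1 != cd.2 else true.

Lemma quadratic_piece_poly i : is_quadratic (piece_poly i).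
Proof.
case: i => [cd|[T|[T cs]]] /=; last exact: quadratic_mask_poly.
  by apply/quadratic_affine/affineB; apply: affine_coord.
apply/quadratic_affine/affineB; last exact: affine_cst.
by apply: affine_sum => c; apply: affine_chart_pi.
Qed.

Lemma piece_poly_nontrivial i : piece_proper i -> exists v, piece_poly i v != 0.
Proof.
have rho01 : 0 < rho < 1 by rewrite rho_gt0 rho_lt1.
pose mass a c : R := (c == a)%:R.
have mass_sum a : \sum_c mass a c = 1.
  by rewrite (bigD1 a) //= /mass eqxx big1 ?addr0 // => c /negbTE ->.
case: i => [[c d]|[T|[T cs]]] /= cd.
- exists (@chart R k c0 (mass c0) (mass c)).
  by rewrite /= /mass eqxx (negbTE (_ : d != c)) 1?eq_sym // subr0 eq_sym pnatr_eq0.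
- exists (@chart R k c0 (mass c0) (mass c0)); rewrite chart_piK //.
  exact: budget_gap_point_mass.
- exists (@chart R k c0 (mass cs) (mass c0)); rewrite chart_piK //.
  exact: mask_poly_point_mass.
Qed.

Lemma lebesgue_null_piece i :
  lebesgue_null (fun v => [/\ piece_proper i, unit_cube v & piece_poly i v = 0]).
Proof.
case i_proper: (piece_proper i); last first.
  by apply: lebesgue_null_sub (lebesgue_null0 (inr c0)) => v [].
apply: (lebesgue_null_sub (S' := fun v => unit_cube v /\ piece_poly i v = 0)).
  by move=> v [].
apply: (lebesgue_null_quadratic_zeros (inr c0)); first exact: quadratic_piece_poly.
exact: piece_poly_nontrivial.
Qed.

Lemma lebesgue_null_degenerate :
  lebesgue_null (fun v => exists pi gamma, (Theta pi gamma /\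
    exists alpha, lp_optimal rho pi gamma alpha /\ (fair alpha \/ masked pi alpha)) /\
    v = @chart R k c0 pi gamma).
Proof.
apply: (lebesgue_null_sub (S' := fun v => exists i,
  [/\ piece_proper i, unit_cube v & piece_poly i v = 0])); last first.
  by apply: (lebesgue_null_fin_bigcup (inr c0)) => i; apply: lebesgue_null_piece.
move=> _ [pi [gamma [[th [alpha [opt cond]]] ->]]].
have [pi0 [pi_sum gamma01]] := th.
have cube : unit_cube (@chart R k c0 pi gamma).
  move=> [c|c] /=; last exact: gamma01.
  rewrite ltW //=; move: pi_sum; rewrite (bigD1 (val c)) //= => <-.
  by rewrite lerDl; apply: sumr_ge0 => c' _; apply: ltW.
have [[c [d [cd gcd]]]|[T gap]|[T [cs mask]]] := optimal_degenerate th opt cond.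
- by exists (inl (c, d)); split => //=; rewrite gcd subrr.
- by exists (inr (inl T)); split => //=; rewrite chart_piK.
- by exists (inr (inr (T, cs))); split => //=; rewrite chart_piK.
Qed.
End Chart.

Theorem mainTheorem7 (R : realType) (k : nat) (hk : (2 <= k)%N)
  (rho : R) (hrho0 : 0 < rho) (hrho1 : rho < 1) :
  Theta_null (fun pi gamma : cell k -> R =>
    Theta pi gamma /\ exists alpha, lp_optimal rho pi gamma alpha /\ fair alpha)
  /\
  Theta_null (fun pi gamma : cell k -> R =>
    Theta pi gamma /\ exists alpha, lp_optimal rho pi gamma alpha /\ masked pi alpha).
Proof.
split=> c0; apply: lebesgue_null_sub (lebesgue_null_degenerate c0 hrho0 hrho1);
  move=> _ [pi [gamma [[th [alpha [opt cond]]] ->]]];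
  exists pi, gamma; split=> //; split=> //; exists alpha; split=> //; by [left | right].
Qed.
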